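(* Let \(X\) be a nonempty set and let \(\Phi\) be a mapping with domain \(X^{2}\). Then the following conditions are equivalent. (i) \(\Phi\) is combinatorially similar to an ultrametric. (ii) There is \(b_0 \in \Phi(X^{2})\) such that \(\Phi^{-1}(b_0) = \Delta_{X}\), the binary relation \(\preccurlyeq_{\Phi} := u_{\Phi}^{t} \cup \Delta_{\Phi(X^{2})}\) is a partial order on \(\Phi(X^{2})\), \(b_0\) is the smallest element of \((\Phi(X^{2}), \preccurlyeq_{\Phi})\), \(\Phi\) is a \(\preccurlyeq_{\Phi}\)-ultrametric on \(X\), and there is a linear order \(\preccurlyeq\) on \(\Phi(X^{2})\) such that \(\preccurlyeq_{\Phi} \subseteq \preccurlyeq\) and \((\Phi(X^{2}), \preccurlyeq)\) is order-isomorphic to a subposet of \(([0,\infty), \leqslant)\). (iii) \(\Phi\) is symmetric, there is \(a_0 \in \Phi(X^{2})\) with \(\Phi^{-1}(a_0) = \Delta_{X}\), for every triple \(\langle x_1, x_2, x_3\rangle\) of points of \(X\) there is a permutation \((i_1,i_2,i_3)\) of \((1,2,3)\) such that \(\Phi(x_{i_1}, x_{i_2}) = \Phi(x_{i_2}, x_{i_3})\), and there is a linear order \(\preccurlyeq\) on \(\Phi(X^{2})\) such that \(a_0\) is the smallest element of \((\Phi(X^{2}), \preccurlyeq)\), \(u_{\Phi} \subseteq \preccurlyeq\), and \((\Phi(X^{2}), \preccurlyeq)\) is order-isomorphic to a subposet of \(([0,\infty), \leqslant)\).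
   Context: For a mapping \(F\) with domain \(A\), \(F(A)\) denotes its range; \(\Delta_S=\{\langle s,s\rangle:s\in S\}\). An ultrametric on a set \(Z\) is a symmetric \(d\colon Z^2\to[0,\infty)\) with \(d(x,y)=0\) iff \(x=y\) and \(d(x,y)\le\max\{d(x,z),d(z,y)\}\). For a poset \((Q,\preccurlyeq_Q)\) with smallest element \(q_0\), a mapping \(d\colon Z^2\to Q\) is a \(\preccurlyeq_Q\)-ultrametric if \(d\) is symmetric, \(d(x,y)=q_0\) iff \(x=y\), and for every triple \(\langle z_1,z_2,z_3\rangle\) in \(Z\) there is a permutation \((i_1,i_2,i_3)\) of \((1,2,3)\) with \(d(z_{i_1},z_{i_3})\preccurlyeq_Q d(z_{i_1},z_{i_2})=d(z_{i_2},z_{i_3})\). For nonempty sets \(X,Y\) and mappings \(\Phi\) with domain \(X^2\), \(\Psi\) with domain \(Y^2\), \(\Phi\) is combinatorially similar to \(\Psi\) if there are bijections \(f\colon \Phi(X^2)\to\Psi(Y^2)\) and \(g\colon Y\to X\) with \(\Psi(x,y)=f(\Phi(g(x),g(y)))\) for all \(x,y\in Y\). For \(Y=\Phi(X^2)\), \(\langle y_1,y_2\rangle\in u_\Phi\) iff \(y_1,y_2\in Y\) and there are \(x_1,x_2,x_3\in X\) with \(y_1=\Phi(x_1,x_3)\), \(y_2=\Phi(x_1,x_2)=\Phi(x_2,x_3)\). The transitive closure is \(\gamma^t=\bigcup_{n\ge1}\gamma^n\), \(\gamma^{n+1}=\gamma^n\circ\gamma\), with \(\langle x,y\rangle\in\alpha\circ\beta\)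 iff \(\exists z\): \(\langle x,z\rangle\in\alpha\), \(\langle z,y\rangle\in\beta\). *)

From Stdlib Require Import List Permutation.
Import ListNotations.
From Stdlib Require Import Reals Relations.
Open Scope R_scope.

Definition range2 {X Y : Type} (Phi : X -> X -> Y) : Y -> Prop :=
  fun y => exists x1 x2, Phi x1 x2 = y.

Definition bij_on {A B : Type} (f : A -> B) (SA : A -> Prop) (SB : B -> Prop) : Prop :=
  (forall a, SA a -> SB (f a)) /\
  (forall a1 a2, SA a1 -> SA a2 -> f a1 = f a2 -> a1 = a2) /\
  (forall b, SB b -> exists a, SA a /\ f a = b).

Definition bijective {A B : Type} (g : A -> B) : Prop :=
  (forall a1 a2, g a1 = g a2 -> a1 = a2) /\ (forall b, exists a, g a = b).

Definition symmetric2 {Z Q : Type} (d : Z -> Z -> Q) : Prop :=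
  forall x y, d x y = d y x.

Definition ultrametric {Z : Type} (d : Z -> Z -> R) : Prop :=
  (forall x y, 0 <= d x y) /\ symmetric2 d /\
  (forall x y, d x y = 0 <-> x = y) /\
  (forall x y z, d x y <= Rmax (d x z) (d z y)).

Definition comb_similar {X Y Z W : Type} (Phi : X -> X -> Y) (Psi : Z -> Z -> W) : Prop :=
  exists (f : Y -> W) (g : Z -> X),
    bij_on f (range2 Phi) (range2 Psi) /\ bijective g /\
    forall x y, Psi x y = f (Phi (g x) (g y)).

Definition comb_similar_to_ultrametric {X Y : Type} (Phi : X -> X -> Y) : Prop :=
  exists (Z : Type) (d : Z -> Z -> R),
    inhabited Z /\ ultrametric d /\ comb_similar Phi d.

Definition u_rel {X Y : Type} (Phi : X -> X -> Y) : relation Y :=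
  fun y1 y2 => range2 Phi y1 /\ range2 Phi y2 /\
    exists x1 x2 x3, y1 = Phi x1 x3 /\ y2 = Phi x1 x2 /\ y2 = Phi x2 x3.

Definition diag_on {Y : Type} (S : Y -> Prop) : relation Y :=
  fun y1 y2 => S y1 /\ y1 = y2.

Definition preceq_Phi {X Y : Type} (Phi : X -> X -> Y) : relation Y :=
  fun y1 y2 => clos_trans Y (u_rel Phi) y1 y2 \/ diag_on (range2 Phi) y1 y2.

Definition partial_order_on {Y : Type} (S : Y -> Prop) (le : relation Y) : Prop :=
  (forall a b, le a b -> S a /\ S b) /\
  (forall a, S a -> le a a) /\
  (forall a b, le a b -> le b a -> a = b) /\
  (forall a b c, le a b -> le b c -> le a c).

Definition linear_order_on {Y : Type} (S : Y -> Prop) (le : relation Y) : Prop :=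
  partial_order_on S le /\ (forall a b, S a -> S b -> le a b \/ le b a).

Definition smallest_elem {Y : Type} (S : Y -> Prop) (le : relation Y) (q0 : Y) : Prop :=
  S q0 /\ forall y, S y -> le q0 y.

Definition rel_incl {Y : Type} (r1 r2 : relation Y) : Prop :=
  forall a b, r1 a b -> r2 a b.

Definition embeds_in_nonneg_reals {Y : Type} (S : Y -> Prop) (le : relation Y) : Prop :=
  exists h : Y -> R,
    (forall a, S a -> 0 <= h a) /\
    (forall a b, S a -> S b -> h a = h b -> a = b) /\
    (forall a b, S a -> S b -> (le a b <-> h a <= h b)).

Definition poset_ultrametric {Z Q : Type} (le : relation Q) (q0 : Q) (d : Z -> Z -> Q) : Prop :=
  symmetric2 d /\
  (forall x y, d x y = q0 <-> x = y) /\
  (forall z1 z2 z3 : Z,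
     let z := fun i : nat => match i with 1%nat => z1 | 2%nat => z2 | _ => z3 end in
     exists i1 i2 i3 : nat,
       Permutation.Permutation [i1; i2; i3] [1%nat; 2%nat; 3%nat] /\
       le (d (z i1) (z i3)) (d (z i1) (z i2)) /\ d (z i1) (z i2) = d (z i2) (z i3)).

Definition cond_ii {X Y : Type} (Phi : X -> X -> Y) : Prop :=
  exists b0, range2 Phi b0 /\
    (forall x y, Phi x y = b0 <-> x = y) /\
    partial_order_on (range2 Phi) (preceq_Phi Phi) /\
    smallest_elem (range2 Phi) (preceq_Phi Phi) b0 /\
    poset_ultrametric (preceq_Phi Phi) b0 Phi /\
    exists le, linear_order_on (range2 Phi) le /\
      rel_incl (preceq_Phi Phi) le /\ embeds_in_nonneg_reals (range2 Phi) le.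

Definition cond_iii {X Y : Type} (Phi : X -> X -> Y) : Prop :=
  symmetric2 Phi /\
  exists a0, range2 Phi a0 /\
    (forall x y, Phi x y = a0 <-> x = y) /\
    (forall x1 x2 x3 : X,
       let x := fun i : nat => match i with 1%nat => x1 | 2%nat => x2 | _ => x3 end in
       exists i1 i2 i3 : nat,
         Permutation.Permutation [i1; i2; i3] [1%nat; 2%nat; 3%nat] /\
         Phi (x i1) (x i2) = Phi (x i2) (x i3)) /\
    exists le, linear_order_on (range2 Phi) le /\
      smallest_elem (range2 Phi) le a0 /\
      rel_incl (u_rel Phi) le /\ embeds_in_nonneg_reals (range2 Phi) le.

(* Condition (iii) is the hub.  In an ultrametric every triangle is isosceles
   with base at most the legs; pushed through a combinatorial similarity this
   gives (iii), the linear order being pulled back from the reals.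
   Conversely, an order embedding h of the values into [0, oo), shifted so that
   the diagonal value goes to 0, turns Phi into an ultrametric, because
   u_Phi being contained in the order says exactly that bases are at most legs.
   Condition (ii) only adds the order generated by u_Phi, which is a partial
   order because it sits inside the linear order of (iii). *)

From Stdlib Require Import Reals Relations Permutation Lra List.
Import ListNotations.
Open Scope R_scope.

Definition injective_on {A B : Type} (S : A -> Prop) (f : A -> B) : Prop :=
  forall a1 a2, S a1 -> S a2 -> f a1 = f a2 -> a1 = a2.

Definition pick3 {Z : Type} (z1 z2 z3 : Z) (i : nat) : Z :=
  match i with 1%nat => z1 | 2%nat => z2 | _ => z3 end.

Lemma pick3_map {Z W : Type} (g : Z -> W) (z1 z2 z3 : Z) (i : nat) :
  pick3 (g z1) (g z2) (g z3) i = g (pick3 z1 z2 z3 i).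
Proof. destruct i as [|[|[|]]]; reflexivity. Qed.

Lemma ex_perm123 (P : nat -> nat -> nat -> Prop) :
  (exists i1 i2 i3, Permutation [i1; i2; i3] [1; 2; 3]%nat /\ P i1 i2 i3) <->
  P 1%nat 2%nat 3%nat \/ P 1%nat 3%nat 2%nat \/ P 2%nat 1%nat 3%nat \/
  P 2%nat 3%nat 1%nat \/ P 3%nat 1%nat 2%nat \/ P 3%nat 2%nat 1%nat.
Proof.
  split.
  - intros (a & b & c & Hp & HP).
    assert (Hin : forall i, In i [a; b; c] -> In i [1; 2; 3]%nat)
      by (intros i; apply Permutation_in, Hp).
    assert (Hnd : NoDup [a; b; c]).
    { apply (Permutation_NoDup (Permutation_sym Hp)).
      repeat constructor; simpl; intuition discriminate. }
    apply NoDup_cons_iff in Hnd as [Ha Hnd]; apply NoDup_cons_iff in Hnd as [Hb _].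
    destruct (Hin a ltac:(simpl; auto)) as [<-|[<-|[<-|[]]]];
    destruct (Hin b ltac:(simpl; auto)) as [<-|[<-|[<-|[]]]];
    destruct (Hin c ltac:(simpl; auto)) as [<-|[<-|[<-|[]]]];
    first [tauto | exfalso; simpl in Ha, Hb; tauto].
  - intros [H|[H|[H|[H|[H|H]]]]]; eexists _, _, _; split; try exact H.
    + apply Permutation_refl.
    + apply perm_skip, perm_swap.
    + apply perm_swap.
    + apply Permutation_sym, (Permutation_cons_append [2; 3]%nat).
    + apply (Permutation_cons_append [1; 2]%nat).
    + apply Permutation_sym, (Permutation_rev [1; 2; 3]%nat).
Qed.

Lemma Rmax_isosceles (a b c : R) :
  a <= Rmax c b -> b <= Rmax a c -> c <= Rmax a b ->
  (a = b /\ c <= a) \/ (b = c /\ a <= b) \/ (c = a /\ b <= c).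
Proof.
  unfold Rmax; intros.
  destruct (Rle_dec c b), (Rle_dec a c), (Rle_dec a b);
    first [left; split; lra | right; left; split; lra | right; right; split; lra].
Qed.

(* The triangle clauses of [cond_iii] and [poset_ultrametric], up to conversion;
   [z i2] is the apex. *)
Definition isosceles_triangles {Z Q : Type} (d : Z -> Z -> Q) : Prop :=
  forall z1 z2 z3 : Z, let z := pick3 z1 z2 z3 in
  exists i1 i2 i3 : nat,
    Permutation [i1; i2; i3] [1%nat; 2%nat; 3%nat] /\
    d (z i1) (z i2) = d (z i2) (z i3).

Definition ultra_triangles {Z Q : Type} (le : relation Q) (d : Z -> Z -> Q) : Prop :=
  forall z1 z2 z3 : Z, let z := pick3 z1 z2 z3 in
  exists i1 i2 i3 : nat,
    Permutation [i1; i2; i3] [1%nat; 2%nat; 3%nat] /\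
    le (d (z i1) (z i3)) (d (z i1) (z i2)) /\ d (z i1) (z i2) = d (z i2) (z i3).

Section Triangles.
Context {Z Q : Type}.

Lemma ultra_triangles_isosceles (le : relation Q) (d : Z -> Z -> Q) :
  ultra_triangles le d -> isosceles_triangles d.
Proof.
  intros H z1 z2 z3.
  destruct (H z1 z2 z3) as (i1 & i2 & i3 & Hp & _ & E); eauto.
Qed.

Lemma ultra_triangles_map {Q' : Type} (le : relation Q) (le' : relation Q')
    (F : Q -> Q') (d : Z -> Z -> Q) :
  (forall a b, le a b -> le' (F a) (F b)) ->
  ultra_triangles le d -> ultra_triangles le' (fun x y => F (d x y)).
Proof.
  intros HF H z1 z2 z3.
  destruct (H z1 z2 z3) as (i1 & i2 & i3 & Hp & Hle & E).
  exists i1, i2, i3; cbv beta; rewrite <- E; auto.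
Qed.

Lemma ultra_triangles_mono (le le' : relation Q) (d : Z -> Z -> Q) :
  rel_incl le le' -> ultra_triangles le d -> ultra_triangles le' d.
Proof. apply (ultra_triangles_map le le' (fun q => q)). Qed.

Lemma isosceles_triangles_reflect {Q' : Type} (d : Z -> Z -> Q) (d' : Z -> Z -> Q') :
  (forall a b c e, d a b = d c e -> d' a b = d' c e) ->
  isosceles_triangles d -> isosceles_triangles d'.
Proof.
  intros Hd H z1 z2 z3.
  destruct (H z1 z2 z3) as (i1 & i2 & i3 & Hp & E).
  exists i1, i2, i3; split; [exact Hp | apply Hd, E].
Qed.

Lemma isosceles_triangles_precomp {X : Type} (Phi : X -> X -> Q) (g : Z -> X) :
  (forall x, exists z, g z = x) ->
  isosceles_triangles (fun a b => Phi (g a) (g b)) -> isosceles_triangles Phi.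
Proof.
  intros Hg H x1 x2 x3.
  destruct (Hg x1) as [z1 <-], (Hg x2) as [z2 <-], (Hg x3) as [z3 <-].
  destruct (H z1 z2 z3) as (i1 & i2 & i3 & Hp & E).
  exists i1, i2, i3; cbv zeta; rewrite !pick3_map; auto.
Qed.

End Triangles.

Section ValueRelation.
Context {X Y : Type} (Phi : X -> X -> Y).

Lemma ultra_triangles_u_rel : isosceles_triangles Phi -> ultra_triangles (u_rel Phi) Phi.
Proof.
  intros H x1 x2 x3.
  destruct (H x1 x2 x3) as (i1 & i2 & i3 & Hp & E).
  exists i1, i2, i3; repeat split; auto.
  - eexists; eexists; reflexivity.
  - eexists; eexists; reflexivity.
  - do 3 eexists; eauto.
Qed.

Lemma u_rel_diag (p q : X) : symmetric2 Phi -> u_rel Phi (Phi p p) (Phi p q).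
Proof.
  intros Hsym; repeat split; try (eexists; eexists; reflexivity).
  exists p, q, p; auto.
Qed.

Lemma clos_trans_u_rel_range (a b : Y) :
  clos_trans Y (u_rel Phi) a b -> range2 Phi a /\ range2 Phi b.
Proof.
  induction 1 as [a b (Ra & Rb & _)|a b c _ [Ra _] _ [_ Rc]]; auto.
Qed.

Lemma preceq_Phi_incl (le : relation Y) :
  partial_order_on (range2 Phi) le -> rel_incl (u_rel Phi) le ->
  rel_incl (preceq_Phi Phi) le.
Proof.
  intros (_ & Hrefl & _ & Htrans) Hu a b [Hab|[Ra <-]]; [|auto].
  induction Hab; eauto.
Qed.

Lemma partial_order_preceq_Phi (le : relation Y) :
  partial_order_on (range2 Phi) le -> rel_incl (u_rel Phi) le ->
  partial_order_on (range2 Phi) (preceq_Phi Phi).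
Proof.
  intros Hle Hu.
  pose proof (preceq_Phi_incl le Hle Hu) as Hincl.
  destruct Hle as (_ & _ & Hanti & _).
  split; [|split; [|split]].
  - intros a b [Hab|[Ra <-]]; [exact (clos_trans_u_rel_range _ _ Hab)|auto].
  - intros a Ra; right; split; auto.
  - intros a b Hab Hba; apply Hanti; auto.
  - intros a b c [Hab|[Ra <-]] [Hbc|[Rb <-]];
      solve [left; eapply t_trans; eassumption | left; assumption | right; split; auto].
Qed.

End ValueRelation.

Section RealUltrametric.
Context {Z : Type} (d : Z -> Z -> R).

Lemma ultrametric_ultra_triangles : ultrametric d -> ultra_triangles Rle d.
Proof.
  intros (_ & Hsym & _ & Htri) z1 z2 z3.
  pose proof (Htri z1 z2 z3) as H12; pose proof (Htri z2 z3 z1) as H23;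
    pose proof (Htri z1 z3 z2) as H13.
  apply ex_perm123; cbv beta delta [pick3] iota.
  rewrite (Hsym z3 z2), (Hsym z2 z1) in *.
  destruct (Rmax_isosceles _ _ _ H12 H23 H13) as [[E L]|[[E L]|[E L]]];
    [left | right; left | right; right; left]; split; lra.
Qed.

Lemma strong_triangle_of_ultra_triangles :
  symmetric2 d -> ultra_triangles Rle d ->
  forall x y z, d x y <= Rmax (d x z) (d z y).
Proof.
  intros Hsym H x y z.
  pose proof (Hsym x y); pose proof (Hsym x z); pose proof (Hsym z y).
  destruct (proj1 (ex_perm123 _) (H x y z)) as [[L E]|[[L E]|[[L E]|[[L E]|[[L E]|[L E]]]]]];
    cbv beta delta [pick3] iota in L, E; unfold Rmax; destruct Rle_dec; lra.
Qed.

End RealUltrametric.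

Definition pullback_le {Y : Type} (S : Y -> Prop) (h : Y -> R) : relation Y :=
  fun a b => S a /\ S b /\ h a <= h b.

Section Pullback.
Context {Y : Type} (S : Y -> Prop) (h : Y -> R) (h_inj : injective_on S h).

Lemma linear_order_on_pullback_le : linear_order_on S (pullback_le S h).
Proof.
  split; [split; [|split; [|split]]|].
  - intros a b (Ha & Hb & _); auto.
  - intros a Ha; repeat split; auto; apply Rle_refl.
  - intros a b (Ha & Hb & Hab) (_ & _ & Hba); apply h_inj; auto; lra.
  - intros a b c (Ha & _ & Hab) (_ & Hc & Hbc); repeat split; auto; lra.
  - intros a b Ha Hb; destruct (Rle_lt_dec (h a) (h b));
      [left; repeat split | right; repeat split]; auto; lra.
Qed.

Lemma embeds_pullback_le :
  (forall a, S a -> 0 <= h a) -> embeds_in_nonneg_reals S (pullback_le S h).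
Proof.
  intros h_nonneg; exists h; repeat split; auto.
  intros (_ & _ & Hab); exact Hab.
Qed.

End Pullback.

Section CondIiIii.
Context {X Y : Type} (Phi : X -> X -> Y).

Lemma cond_iii_of_cond_ii : cond_ii Phi -> cond_iii Phi.
Proof.
  intros (b0 & Rb0 & Hdiag & _ & (_ & Hsmall) & (Hsym & _ & Hultra) & le & Hlin & Hincl & Hemb).
  split; [exact Hsym|]; exists b0.
  split; [exact Rb0|]; split; [exact Hdiag|]; split.
  - exact (ultra_triangles_isosceles _ Phi Hultra).
  - exists le; split; [exact Hlin|]; split; [|split; [|exact Hemb]].
    + split; [exact Rb0 | intros y Ry; apply Hincl, Hsmall, Ry].
    + intros a b Hab; apply Hincl; left; apply t_step, Hab.
Qed.

Lemma cond_ii_of_cond_iii : cond_iii Phi -> cond_ii Phi.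
Proof.
  intros (Hsym & a0 & Ra0 & Hdiag & Hiso & le & Hlin & _ & Hu & Hemb).
  assert (Hu_pre : rel_incl (u_rel Phi) (preceq_Phi Phi))
    by (intros a b Hab; left; apply t_step, Hab).
  exists a0; split; [exact Ra0|]; split; [exact Hdiag|]; split; [|split; [|split]].
  - exact (partial_order_preceq_Phi Phi le (proj1 Hlin) Hu).
  - split; [exact Ra0|]; intros y (p & q & <-).
    rewrite <- (proj2 (Hdiag p p) eq_refl); apply Hu_pre, u_rel_diag, Hsym.
  - split; [exact Hsym|]; split; [exact Hdiag|].
    exact (ultra_triangles_mono _ _ Phi Hu_pre (ultra_triangles_u_rel Phi Hiso)).
  - exists le; split; [exact Hlin|]; split; [|exact Hemb].
    exact (preceq_Phi_incl Phi le (proj1 Hlin) Hu).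
Qed.

End CondIiIii.

Section SimilarToUltrametric.
Context {X Y Z : Type} (Phi : X -> X -> Y) (d : Z -> Z -> R) (f : Y -> R) (g : Z -> X).
Hypothesis d_ultra : ultrametric d.
Hypothesis f_inj : injective_on (range2 Phi) f.
Hypothesis g_surj : forall x, exists z, g z = x.
Hypothesis d_eq : forall a b, d a b = f (Phi (g a) (g b)).

Lemma Phi_g_eq_iff (a b c e : Z) : Phi (g a) (g b) = Phi (g c) (g e) <-> d a b = d c e.
Proof.
  rewrite !d_eq; split; [intros ->; reflexivity|].
  apply f_inj; do 2 eexists; reflexivity.
Qed.

Lemma Phi_symmetric : symmetric2 Phi.
Proof.
  intros x y; destruct (g_surj x) as [a <-], (g_surj y) as [b <-].
  apply Phi_g_eq_iff, d_ultra.
Qed.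

Lemma Phi_diag_iff (z0 : Z) (x y : X) : Phi x y = Phi (g z0) (g z0) <-> x = y.
Proof.
  destruct d_ultra as (_ & _ & d_zero & _).
  destruct (g_surj x) as [a <-], (g_surj y) as [b <-]; split.
  - intros E%Phi_g_eq_iff.
    rewrite (proj2 (d_zero z0 z0) eq_refl) in E; apply d_zero in E; subst; reflexivity.
  - intros ->; apply Phi_g_eq_iff.
    rewrite (proj2 (d_zero b b) eq_refl), (proj2 (d_zero z0 z0) eq_refl); reflexivity.
Qed.

Lemma f_nonneg (y : Y) : range2 Phi y -> 0 <= f y.
Proof.
  intros (x1 & x2 & <-); destruct (g_surj x1) as [a <-], (g_surj x2) as [b <-].
  rewrite <- d_eq; apply d_ultra.
Qed.

Lemma u_rel_f_le (a b : Y) : u_rel Phi a b -> f a <= f b.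
Proof.
  intros (_ & _ & x1 & x2 & x3 & -> & -> & E).
  destruct (g_surj x1) as [z1 <-], (g_surj x2) as [z2 <-], (g_surj x3) as [z3 <-].
  apply Phi_g_eq_iff in E; rewrite <- !d_eq.
  pose proof (proj2 (proj2 (proj2 d_ultra)) z1 z3 z2) as Htri.
  rewrite <- E in Htri; unfold Rmax in Htri; destruct Rle_dec; lra.
Qed.

Lemma isosceles_triangles_Phi : isosceles_triangles Phi.
Proof.
  apply (isosceles_triangles_precomp Phi g g_surj).
  apply (isosceles_triangles_reflect d); [intros a b c e; apply Phi_g_eq_iff|].
  apply (ultra_triangles_isosceles Rle), ultrametric_ultra_triangles, d_ultra.
Qed.

Lemma cond_iii_of_similar_ultrametric (z0 : Z) : cond_iii Phi.
Proof.
  assert (Ra0 : range2 Phi (Phi (g z0) (g z0))) by (do 2 eexists; reflexivity).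
  split; [exact Phi_symmetric|]; exists (Phi (g z0) (g z0)).
  split; [exact Ra0|]; split; [intros x y; apply Phi_diag_iff|].
  split; [exact isosceles_triangles_Phi|].
  exists (pullback_le (range2 Phi) f).
  split; [exact (linear_order_on_pullback_le _ _ f_inj)|].
  split; [|split; [|exact (embeds_pullback_le _ _ f_inj f_nonneg)]].
  - split; [exact Ra0|]; intros y Ry; repeat split; auto.
    rewrite <- d_eq, (proj2 (proj1 (proj2 (proj2 d_ultra)) z0 z0) eq_refl).
    apply f_nonneg, Ry.
  - intros a b Hab; pose proof Hab as (Ra & Rb & _).
    repeat split; auto; apply u_rel_f_le, Hab.
Qed.

End SimilarToUltrametric.

Lemma cond_iii_of_comb_similar_to_ultrametric {X Y : Type} (Phi : X -> X -> Y) :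
  comb_similar_to_ultrametric Phi -> cond_iii Phi.
Proof.
  intros (Z & d & [z0] & Hd & f & g & (_ & f_inj & _) & (_ & g_surj) & d_eq).
  exact (cond_iii_of_similar_ultrametric Phi d f g Hd f_inj g_surj d_eq z0).
Qed.

Lemma comb_similar_comp {X Y W : Type} (Phi : X -> X -> Y) (F : Y -> W) :
  injective_on (range2 Phi) F -> comb_similar Phi (fun x y => F (Phi x y)).
Proof.
  intros F_inj; exists F, (fun x => x).
  split; [split; [|split; [exact F_inj|]] | split; [split; auto|reflexivity]].
  - intros a (p & q & <-); exists p, q; reflexivity.
  - intros b (p & q & <-); exists (Phi p q); split; [exists p, q|]; reflexivity.
  - intros b; exists b; reflexivity.
Qed.

Section UltrametricFromEmbedding.
Context {X Y : Type} (Phi : X -> X -> Y) (a0 : Y) (le : relation Y) (h : Y -> R).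
Hypothesis Phi_sym : symmetric2 Phi.
Hypothesis Phi_diag : forall x y, Phi x y = a0 <-> x = y.
Hypothesis Phi_iso : isosceles_triangles Phi.
Hypothesis a0_smallest : smallest_elem (range2 Phi) le a0.
Hypothesis u_le : rel_incl (u_rel Phi) le.
Hypothesis h_inj : injective_on (range2 Phi) h.
Hypothesis h_le : forall a b, range2 Phi a -> range2 Phi b -> (le a b <-> h a <= h b).

Lemma ultrametric_shifted_embedding : ultrametric (fun x y => h (Phi x y) - h a0).
Proof.
  destruct a0_smallest as [Ra0 Hsmall].
  assert (Hrange : forall p q, range2 Phi (Phi p q)) by (intros; do 2 eexists; reflexivity).
  assert (Hsym : symmetric2 (fun x y => h (Phi x y) - h a0))
    by (intros x y; rewrite Phi_sym; reflexivity).
  split; [|split; [exact Hsym|split]].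
  - intros x y; enough (h a0 <= h (Phi x y)) by lra.
    apply h_le, Hsmall; auto.
  - intros x y; rewrite <- Phi_diag; split.
    + intros E; apply h_inj; auto; lra.
    + intros ->; ring.
  - apply strong_triangle_of_ultra_triangles; [exact Hsym|].
    apply (ultra_triangles_map (u_rel Phi) Rle (fun y => h y - h a0)).
    + intros a b Hab; pose proof Hab as (Ra & Rb & _).
      apply u_le, h_le in Hab; auto; lra.
    + apply ultra_triangles_u_rel, Phi_iso.
Qed.

End UltrametricFromEmbedding.

Lemma comb_similar_to_ultrametric_of_cond_iii {X Y : Type} (Phi : X -> X -> Y) :
  inhabited X -> cond_iii Phi -> comb_similar_to_ultrametric Phi.
Proof.
  intros hX (Hsym & a0 & _ & Hdiag & Hiso & le & _ & Hsmall & Hu & h & _ & h_inj & h_le).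
  exists X, (fun x y => h (Phi x y) - h a0); split; [exact hX|]; split.
  - exact (ultrametric_shifted_embedding Phi a0 le h Hsym Hdiag Hiso Hsmall Hu h_inj h_le).
  - apply (comb_similar_comp Phi (fun y => h y - h a0)).
    intros a b Ra Rb E; apply h_inj; auto; lra.
Qed.

Theorem corollary4p22 (X Y : Type) (Phi : X -> X -> Y) (hX : inhabited X) :
  (comb_similar_to_ultrametric Phi <-> cond_ii Phi) /\
  (cond_ii Phi <-> cond_iii Phi).
Proof.
  split; split; intros H.
  - apply cond_ii_of_cond_iii, cond_iii_of_comb_similar_to_ultrametric, H.
  - apply (comb_similar_to_ultrametric_of_cond_iii Phi hX), cond_iii_of_cond_ii, H.
  - apply cond_iii_of_cond_ii, H.
  - apply cond_ii_of_cond_iii, H.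
Qed.
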